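(* For every positive integer $m$ and all complex numbers $\alpha \neq 0$ and $x$, $$\sum_{k=1}^m \binom{m}{k} k^\alpha x^k = \sum_{j=1}^m \binom{m}{j} j!\, S(\alpha, j)\, x^j (1+x)^{m-j}.$$
   Context: For a complex number $\alpha \neq 0$ and a positive integer $k$, the Stirling function of the second kind is $$S(\alpha, k) = \frac{1}{k!} \sum_{j=1}^k (-1)^{k-j} \binom{k}{j} j^\alpha,$$ where for a positive integer $j$, $j^\alpha = e^{\alpha \ln j}$ with $\ln j$ the real logarithm. Here $(1+x)^0 = 1$ for all $x$. *)

From Stdlib Require Import Reals Arith Factorial.
Open Scope R_scope.

(* Complex numbers z = (Re z, Im z). *)
Definition Cplx : Type := (R * R)%type.

Definition RtoC (r : R) : Cplx := (r, 0).
Definition Czero : Cplx := (0, 0).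
Definition Cone : Cplx := (1, 0).
Definition Cadd (z w : Cplx) : Cplx := (fst z + fst w, snd z + snd w).
Definition Cmul (z w : Cplx) : Cplx :=
  (fst z * fst w - snd z * snd w, fst z * snd w + snd z * fst w).

Fixpoint Cpow (z : Cplx) (n : nat) : Cplx :=
  match n with O => Cone | S n' => Cmul z (Cpow z n') end.

Definition Cexp (z : Cplx) : Cplx :=
  (exp (fst z) * cos (snd z), exp (fst z) * sin (snd z)).

(* j^alpha := e^(alpha ln j) for a positive integer j, ln the real logarithm *)
Definition natCpow (j : nat) (alpha : Cplx) : Cplx :=
  Cexp (Cmul alpha (RtoC (ln (INR j)))).

Fixpoint Csum1 (f : nat -> Cplx) (m : nat) : Cplx :=
  match m with O => Czero | S m' => Cadd (Csum1 f m') (f (S m')) end.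

Definition Stirling2 (alpha : Cplx) (k : nat) : Cplx :=
  Cmul (RtoC (/ INR (fact k)))
       (Csum1 (fun j => Cmul (RtoC ((-1) ^ (k - j) * Binomial.C k j))
                             (natCpow j alpha)) k).

From Stdlib Require Import Reals Arith Factorial Lia.
Open Scope R_scope.

(* Write a_k := k^alpha for k >= 1 and a_0 := 0.  Unfolding the
   Stirling function, j! S(alpha,j) is the j-th forward difference of a at 0,
     (Delta^j a)(0) = sum_{i<=j} (-1)^(j-i) binom(j,i) a_i,
   so the theorem is an instance of a purely algebraic identity valid for
   every complex sequence a:
     sum_{j<=m} binom(m,j) (Delta^j a)(0) x^j (1+x)^(m-j)
       = sum_{k<=m} binom(m,k) a_k x^k.
   Exchanging the two sums, the coefficient of a_i on the left is
     binom(m,i) x^i sum_l binom(m-i,l) (-x)^l (1+x)^(m-i-l)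
       = binom(m,i) x^i (-x + (1+x))^(m-i) = binom(m,i) x^i
   by the identity binom(m,j) binom(j,i) = binom(m,i) binom(m-i,j-i) and the
   binomial theorem. *)

Definition Copp (z : Cplx) : Cplx := (- fst z, - snd z).
Definition Csub (z w : Cplx) : Cplx := Cadd z (Copp w).

Lemma Cring_theory : ring_theory Czero Cone Cadd Cmul Csub Copp (@eq Cplx).
Proof.
  constructor; intros;
    repeat match goal with z : Cplx |- _ => destruct z end;
    unfold Cadd, Cmul, Csub, Copp, Czero, Cone; simpl; try reflexivity;
    f_equal; ring.
Qed.
Add Ring Cring : Cring_theory.

Lemma RtoC_add (a b : R) : RtoC (a + b) = Cadd (RtoC a) (RtoC b).
Proof. unfold RtoC, Cadd; simpl; f_equal; ring. Qed.

Lemma RtoC_mul (a b : R) : RtoC (a * b) = Cmul (RtoC a) (RtoC b).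
Proof. unfold RtoC, Cmul; simpl; f_equal; ring. Qed.

Lemma Cpow_add (z : Cplx) (a b : nat) : Cpow z (a + b) = Cmul (Cpow z a) (Cpow z b).
Proof. induction a as [|a IH]; simpl; [ring | rewrite IH; ring]. Qed.

Lemma Cpow_mul (z w : Cplx) (n : nat) : Cpow (Cmul z w) n = Cmul (Cpow z n) (Cpow w n).
Proof. induction n as [|n IH]; simpl; [|rewrite IH]; ring. Qed.

Lemma Cpow_RtoC (r : R) (n : nat) : Cpow (RtoC r) n = RtoC (r ^ n).
Proof. induction n as [|n IH]; simpl; [reflexivity | rewrite IH, RtoC_mul; reflexivity]. Qed.

Lemma Cpow_one (n : nat) : Cpow Cone n = Cone.
Proof. induction n as [|n IH]; simpl; [|rewrite IH]; ring. Qed.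

Fixpoint sumN (f : nat -> Cplx) (n : nat) : Cplx :=
  match n with O => Czero | S n' => Cadd (sumN f n') (f n') end.

Lemma sumN_ext (f g : nat -> Cplx) (n : nat) :
  (forall k, (k < n)%nat -> f k = g k) -> sumN f n = sumN g n.
Proof.
  induction n as [|n IH]; intros Hfg; simpl; [reflexivity|].
  rewrite IH by (intros; apply Hfg; lia). rewrite Hfg by lia. reflexivity.
Qed.

Lemma sumN_zero (f : nat -> Cplx) (n : nat) :
  (forall k, (k < n)%nat -> f k = Czero) -> sumN f n = Czero.
Proof.
  induction n as [|n IH]; intros Hf; simpl; [reflexivity|].
  rewrite IH by (intros; apply Hf; lia). rewrite Hf by lia. ring.
Qed.

Lemma sumN_add (f g : nat -> Cplx) (n : nat) :
  sumN (fun k => Cadd (f k) (g k)) n = Cadd (sumN f n) (sumN g n).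
Proof. induction n as [|n IH]; simpl; [|rewrite IH]; ring. Qed.

Lemma sumN_scal (c : Cplx) (f : nat -> Cplx) (n : nat) :
  sumN (fun k => Cmul c (f k)) n = Cmul c (sumN f n).
Proof. induction n as [|n IH]; simpl; [|rewrite IH]; ring. Qed.

Lemma sumN_split (f : nat -> Cplx) (p n : nat) :
  sumN f (p + n) = Cadd (sumN f p) (sumN (fun k => f (p + k)%nat) n).
Proof.
  induction n as [|n IH]; [rewrite Nat.add_0_r; simpl; ring|].
  rewrite Nat.add_succ_r; simpl; rewrite IH; ring.
Qed.

Lemma sumN_first (f : nat -> Cplx) (n : nat) :
  sumN f (S n) = Cadd (f O) (sumN (fun k => f (S k)) n).
Proof. change (S n) with (1 + n)%nat. rewrite sumN_split; simpl; ring. Qed.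

Lemma sumN_truncate (f : nat -> Cplx) (p n : nat) : (p <= n)%nat ->
  (forall k, (p <= k < n)%nat -> f k = Czero) -> sumN f n = sumN f p.
Proof.
  intros Hpn Hf. replace n with (p + (n - p))%nat by lia.
  rewrite sumN_split, (sumN_zero _ (n - p)) by (intros; apply Hf; lia). ring.
Qed.

Lemma sumN_swap (G : nat -> nat -> Cplx) (n m : nat) :
  sumN (fun i => sumN (fun j => G i j) m) n = sumN (fun j => sumN (fun i => G i j) n) m.
Proof.
  induction n as [|n IH]; simpl.
  - symmetry; apply sumN_zero; reflexivity.
  - rewrite IH, <- sumN_add. reflexivity.
Qed.

Lemma Csum1_ext (f g : nat -> Cplx) (m : nat) :
  (forall k, (1 <= k <= m)%nat -> f k = g k) -> Csum1 f m = Csum1 g m.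
Proof.
  induction m as [|m IH]; intros Hfg; simpl; [reflexivity|].
  rewrite IH by (intros; apply Hfg; lia). rewrite Hfg by lia. reflexivity.
Qed.

Lemma Csum1_sumN (f : nat -> Cplx) (m : nat) : f O = Czero -> Csum1 f m = sumN f (S m).
Proof.
  intros Hf0; induction m as [|m IH]; simpl in *; [rewrite Hf0; ring | rewrite IH; reflexivity].
Qed.

(* Binomial coefficients given by Pascal's rule; unlike Binomial.C they vanish
   for k > n, which lets sums run past the natural range. *)

Fixpoint binom (n k : nat) : R :=
  match n, k with
  | O, O => 1
  | O, S _ => 0
  | S _, O => 1
  | S n', S k' => binom n' k' + binom n' (S k')
  end.

Lemma binom_0 (n : nat) : binom n 0 = 1.
Proof. destruct n; reflexivity. Qed.

Lemma binom_gt (n k : nat) : (n < k)%nat -> binom n k = 0.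
Proof.
  revert k; induction n as [|n IH]; intros [|k] Hnk; simpl; try lia; [reflexivity|].
  rewrite !IH by lia; ring.
Qed.

Lemma Binomial_C_0 (n : nat) : Binomial.C n 0 = 1.
Proof. unfold Binomial.C; rewrite Nat.sub_0_r; simpl; field; apply INR_fact_neq_0. Qed.

Lemma Binomial_C_diag (n : nat) : Binomial.C n n = 1.
Proof. unfold Binomial.C; rewrite Nat.sub_diag; simpl; field; apply INR_fact_neq_0. Qed.

Lemma binom_C (n k : nat) : (k <= n)%nat -> binom n k = Binomial.C n k.
Proof.
  revert k; induction n as [|n IH]; intros [|k] Hkn; simpl;
    try (rewrite Binomial_C_0; reflexivity); try lia.
  destruct (Nat.eq_dec k n) as [->|Hk].
  - rewrite (binom_gt n (S n)), IH, !Binomial_C_diag by lia. ring.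
  - rewrite !IH by lia. apply pascal; lia.
Qed.

Lemma binom_revision (m j i : nat) : (i <= j)%nat -> (j <= m)%nat ->
  binom m j * binom j i = binom m i * binom (m - i) (j - i).
Proof.
  intros Hij Hjm. rewrite !binom_C by lia. unfold Binomial.C.
  replace (m - i - (j - i))%nat with (m - j)%nat by lia.
  pose proof (INR_fact_neq_0 m). pose proof (INR_fact_neq_0 j).
  pose proof (INR_fact_neq_0 i). pose proof (INR_fact_neq_0 (m - j)).
  pose proof (INR_fact_neq_0 (j - i)). pose proof (INR_fact_neq_0 (m - i)).
  field; repeat split; assumption.
Qed.

Definition binom_term (u v : Cplx) (n l : nat) : Cplx :=
  Cmul (RtoC (binom n l)) (Cmul (Cpow u l) (Cpow v (n - l))).

Lemma binom_term_succ (u v : Cplx) (n l : nat) : (l <= n)%nat ->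
  binom_term u v (S n) (S l)
  = Cadd (Cmul u (binom_term u v n l)) (Cmul v (binom_term u v n (S l))).
Proof.
  intros Hln. unfold binom_term; simpl binom; rewrite RtoC_add, Nat.sub_succ.
  destruct (Nat.eq_dec l n) as [->|Hl].
  - rewrite (binom_gt n (S n)) by lia.
    replace (n - S n)%nat with 0%nat by lia. rewrite !Nat.sub_diag.
    change (RtoC 0) with Czero. cbn [Cpow]. ring.
  - replace (n - l)%nat with (S (n - S l)) by lia. cbn [Cpow]. ring.
Qed.

Lemma binomial_theorem (u v : Cplx) (n : nat) :
  Cpow (Cadd u v) n = sumN (binom_term u v n) (S n).
Proof.
  induction n as [|n IH].
  { unfold binom_term; cbn [Cpow sumN binom Nat.sub]. change (RtoC 1) with Cone. ring. }
  (* (u+v) * sum_l t_l = sum_l (u t_l + v t_(l+1)) + v t_0, using t_(n+1) = 0. *)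
  rewrite sumN_first, (sumN_ext _ (fun l => Cadd (Cmul u (binom_term u v n l))
                                                 (Cmul v (binom_term u v n (S l)))))
    by (intros; apply binom_term_succ; lia).
  rewrite sumN_add, !sumN_scal.
  assert (Hlast : sumN (binom_term u v n) (S (S n)) = sumN (binom_term u v n) (S n)).
  { apply sumN_truncate; [lia|]. intros k Hk. unfold binom_term.
    rewrite (binom_gt n k) by lia. change (RtoC 0) with Czero. ring. }
  rewrite sumN_first in Hlast.
  assert (Hhead : binom_term u v (S n) 0 = Cmul v (binom_term u v n 0)).
  { unfold binom_term; rewrite !Nat.sub_0_r, !binom_0; cbn [Cpow]; ring. }
  cbn [Cpow]. rewrite Hhead, IH, <- Hlast. ring.
Qed.

Definition fdiff0 (a : nat -> Cplx) (j : nat) : Cplx :=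
  sumN (fun i => Cmul (RtoC ((-1) ^ (j - i) * binom j i)) (a i)) (S j).

(* The coefficient of a_i after exchanging the sums: by trinomial revision it
   is binom(m,i) x^i times the expansion of (-x + (1+x))^(m-i) = 1. *)
Lemma inversion_kernel (m i : nat) (x : Cplx) : (i <= m)%nat ->
  sumN (fun j => Cmul (RtoC (binom m j * ((-1) ^ (j - i) * binom j i)))
                      (Cmul (Cpow x j) (Cpow (Cadd Cone x) (m - j)))) (S m)
  = Cmul (RtoC (binom m i)) (Cpow x i).
Proof.
  intros Him.
  replace (S m) with (i + S (m - i))%nat by lia.
  rewrite sumN_split, (sumN_zero _ i).
  2:{ intros j Hj. rewrite (binom_gt j i) by lia.
      rewrite !Rmult_0_r. change (RtoC 0) with Czero. ring. }
  rewrite (sumN_ext _ (fun l => Cmul (Cmul (RtoC (binom m i)) (Cpow x i))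
             (binom_term (Cmul (RtoC (-1)) x) (Cadd Cone x) (m - i) l))).
  2:{ intros l Hl. unfold binom_term.
      pose proof (binom_revision m (i + l) i ltac:(lia) ltac:(lia)) as Hrev.
      replace (i + l - i)%nat with l in * by lia.
      replace (m - (i + l))%nat with (m - i - l)%nat by lia.
      replace (binom m (i + l) * ((-1) ^ l * binom (i + l) i))
        with ((-1) ^ l * (binom m (i + l) * binom (i + l) i)) by ring.
      rewrite Hrev, !RtoC_mul, Cpow_add, Cpow_mul, Cpow_RtoC. ring. }
  rewrite sumN_scal, <- binomial_theorem.
  replace (Cadd (Cmul (RtoC (-1)) x) (Cadd Cone x)) with Cone
    by (destruct x; unfold RtoC, Cmul, Cadd, Cone; simpl; f_equal; ring).
  rewrite Cpow_one. ring.
Qed.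

Lemma binomial_inversion (m : nat) (x : Cplx) (a : nat -> Cplx) :
  sumN (fun j => Cmul (RtoC (binom m j))
                      (Cmul (fdiff0 a j) (Cmul (Cpow x j) (Cpow (Cadd Cone x) (m - j))))) (S m)
  = sumN (fun k => Cmul (RtoC (binom m k)) (Cmul (a k) (Cpow x k))) (S m).
Proof.
  (* Extend each inner sum to the common range i <= m (binom(j,i) = 0 for i > j). *)
  rewrite (sumN_ext _ (fun j => sumN (fun i => Cmul (a i)
     (Cmul (RtoC (binom m j * ((-1) ^ (j - i) * binom j i)))
           (Cmul (Cpow x j) (Cpow (Cadd Cone x) (m - j))))) (S m))).
  2:{ intros j Hj. unfold fdiff0.
      rewrite <- (sumN_truncate _ (S j) (S m)); [| lia |].
      2:{ intros i Hi. rewrite (binom_gt j i) by lia.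
          rewrite Rmult_0_r. change (RtoC 0) with Czero. ring. }
      match goal with |- Cmul ?c (Cmul ?s ?d) = _ =>
        transitivity (Cmul (Cmul c d) s); [ring|] end.
      rewrite <- sumN_scal. apply sumN_ext. intros i _. rewrite !RtoC_mul. ring. }
  rewrite sumN_swap. apply sumN_ext. intros i Hi.
  rewrite sumN_scal, inversion_kernel by lia. ring.
Qed.

(* The sequence k |-> k^alpha, set to 0 at k = 0 (the index 0 never occurs in
   the sums of the theorem). *)
Definition power_seq (alpha : Cplx) (k : nat) : Cplx :=
  match k with O => Czero | S _ => natCpow k alpha end.

Lemma Stirling2_fdiff0 (alpha : Cplx) (j : nat) :
  Cmul (RtoC (INR (fact j))) (Stirling2 alpha j) = fdiff0 (power_seq alpha) j.
Proof.
  unfold Stirling2, fdiff0.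
  rewrite (Csum1_ext _ (fun i => Cmul (RtoC ((-1) ^ (j - i) * binom j i)) (power_seq alpha i))).
  2:{ intros [|i] Hi; [lia|]. rewrite (binom_C j) by lia. reflexivity. }
  rewrite Csum1_sumN by (cbn; ring).
  transitivity (Cmul (RtoC (INR (fact j) * / INR (fact j)))
                     (sumN (fun i => Cmul (RtoC ((-1) ^ (j - i) * binom j i))
                                          (power_seq alpha i)) (S j))).
  - rewrite RtoC_mul. ring.
  - rewrite Rinv_r by apply INR_fact_neq_0. change (RtoC 1) with Cone. ring.
Qed.

Theorem proposition2 (m : nat) (alpha x : Cplx) :
  (1 <= m)%nat -> alpha <> Czero ->
  Csum1 (fun k => Cmul (RtoC (Binomial.C m k))
                       (Cmul (natCpow k alpha) (Cpow x k))) m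
  = Csum1 (fun j => Cmul (RtoC (Binomial.C m j * INR (fact j)))
                         (Cmul (Stirling2 alpha j)
                               (Cmul (Cpow x j) (Cpow (Cadd Cone x) (m - j))))) m.
Proof.
  intros _ _.
  rewrite (Csum1_ext _ (fun k => Cmul (RtoC (binom m k))
                                      (Cmul (power_seq alpha k) (Cpow x k)))).
  2:{ intros [|k] Hk; [lia|]. rewrite binom_C by lia. reflexivity. }
  symmetry.
  rewrite (Csum1_ext _ (fun j => Cmul (RtoC (binom m j))
     (Cmul (fdiff0 (power_seq alpha) j) (Cmul (Cpow x j) (Cpow (Cadd Cone x) (m - j)))))).
  2:{ intros j Hj. rewrite <- Stirling2_fdiff0, binom_C, RtoC_mul by lia. ring. }
  rewrite !Csum1_sumN by (unfold fdiff0; cbn [sumN power_seq]; ring).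
  apply binomial_inversion.
Qed.
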